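(* Let $f:X\to\mathrm{SP}(Y)$ be a based multivalued function and $\Sigma f:=\mathrm{id}_{S^1}\triangle f:\Sigma X\to\mathrm{SP}(\Sigma Y)$. For a based space $Z$ let $s_Z:\widetilde{H}^*(Z)\to\widetilde{H}^{*+1}(\Sigma Z)$ be the suspension isomorphism. Then $(\Sigma f)^*\circ s_Y=s_X\circ f^*$ as maps $\widetilde{H}^*(Y)\to\widetilde{H}^{*+1}(\Sigma X)$.
   Context: $\Sigma X=S^1\wedge X$ is the reduced suspension. For a based space $(X,e)$, $\mathrm{SP}(X)$ is the free unital abelian monoid on $X$ with identity $e$, with inclusion $\iota_X:X\to\mathrm{SP}(X)$; $\mathrm{id}_{S^1}$ is regarded as the multivalued function $\iota_{S^1}:S^1\to\mathrm{SP}(S^1)$. For based multivalued functions $f:A\to\mathrm{SP}(B)$, $g:C\to\mathrm{SP}(D)$, $f\triangle g:A\wedge C\to\mathrm{SP}(B\wedge D)$ sends $(a,c)$ to $\sum_{i,j}(b_i,d_j)$ where $f(a)=\sum_i b_i$, $g(c)=\sum_j d_j$. Identify $\widetilde{H}^n(Y)=[Y,\mathrm{SP}(S^n)]_*$; for $\alpha:Y\to\mathrm{SP}(S^n)$ let $\widetilde\alpha:\mathrm{SP}(Y)\to\mathrm{SP}(S^n)$ be its unique continuous homomorphic extension, and for a based map $f:X\to\mathrm{SP}(Y)$ set $f^*[\alpha]=[\widetilde\alpha\circ f]$. *)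

From HB Require Import structures.
From mathcomp Require Import all_boot all_order all_algebra finmap.
From mathcomp Require Import all_classical all_reals all_analysis.
From mathcomp Require multiset.

Set Implicit Arguments.
Unset Strict Implicit.
Unset Printing Implicit Defensive.

Import Order.TTheory GRing.Theory Num.Theory.
Import numFieldNormedType.Exports.
Local Open Scope classical_set_scope.
Local Open Scope ring_scope.

(* open.  With a single surjection this is the quotient topology.           *)
Definition final_top (I : Type) (S : I -> topologicalType) (T : choiceType)
  (g : forall i, S i -> T) : Type := T.

Section final_topology.
Context (I : Type) (S : I -> topologicalType) (T : choiceType)
  (g : forall i, S i -> T).
Local Notation F := (@final_top I S T g).
HB.instance Definition _ := Choice.on F.

Definition final_open (U : set F) := forall i : I, open (@g i @^-1` U).

Program Definition final_topologicalType_mixin :=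
  @isOpenTopological.Build F final_open _ _ _.
Next Obligation. by move=> i; rewrite preimage_setT; exact: openT. Qed.
Next Obligation.
by move=> A B oA oB i; rewrite preimage_setI; apply: openI; [exact: oA|exact: oB].
Qed.
Next Obligation.
move=> J f of_ i; rewrite preimage_bigcup; apply: bigcup_open => j _.
exact: of_.
Qed.
HB.instance Definition _ := final_topologicalType_mixin.
End final_topology.

(* Smash product A /\ C = (A * C) / (A v C), with the quotient topology;    *)
(* carrier: None = base point, Some (a, c) with a, c both non-base.         *)
Section smash_product.
Context (A C : ptopologicalType).

Definition smash_carrier : choiceType :=
  option {p : A * C | (p.1 != point) && (p.2 != point)}.

Definition smash_q (p : A * C) : smash_carrier := insub p.

Definition smash : Type :=
  @final_top unit (fun _ => (A * C)%type) smash_carrier (fun _ => smash_q).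
HB.instance Definition _ := Topological.on smash.
HB.instance Definition _ := isPointed.Build smash (None : smash_carrier).
End smash_product.

(* SP(X): the free unital abelian monoid on X with identity the base point *)
(* e; carrier: finite multisets on X not containing e.  Topology: the      *)
(* colimit topology, final for the maps X^n -> SP(X), (x_i) |-> sum_i x_i. *)
Section symmetric_product.
Context (X : ptopologicalType).

Definition SP_carrier : choiceType :=
  {m : multiset.multiset X | m point == 0%N}.

Lemma SP_zero_proof : (multiset.mset0 : multiset.multiset X) point == 0%N.
Proof. by rewrite multiset.mset0E. Qed.

Definition sp0 : SP_carrier := exist _ multiset.mset0 SP_zero_proof.

Definition spadd (a b : SP_carrier) : SP_carrier :=
  insubd sp0 (multiset.msetD (val a) (val b)).

Definition spsum (s : seq SP_carrier) : SP_carrier := foldr spadd sp0 s.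

(* the inclusion iota_X : X -> SP(X), with iota_X e = identity *)
Definition spi (x : X) : SP_carrier := insubd sp0 (multiset.msetn 1 x).

Definition spelems (m : SP_carrier) : seq X := multiset.enum_mset (val m).

Definition sp_proj (n : nat) (v : {ptws 'I_n -> X}) : SP_carrier :=
  spsum [seq spi (v i) | i <- enum 'I_n].

Definition SP : Type :=
  @final_top nat (fun n => {ptws 'I_n -> X}) SP_carrier sp_proj.
HB.instance Definition _ := Topological.on SP.
HB.instance Definition _ := isPointed.Build SP (sp0 : SP_carrier).
End symmetric_product.

Arguments spi {X}.

Definition sp_ext (Y Z : ptopologicalType) (alpha : Y -> SP Z) : SP Y -> SP Z :=
  fun m => spsum [seq (alpha y : SP_carrier Z) | y <- spelems (m : SP_carrier Y)].

(* f^* on representatives: alpha |-> alpha~ o f *)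
Definition mv_pull (X Y Z : ptopologicalType) (f : X -> SP Y) (alpha : Y -> SP Z)
  : X -> SP Z := sp_ext alpha \o f.

Definition mv_smash (A B C D : ptopologicalType) (f : A -> SP B) (g : C -> SP D)
  : smash A C -> SP (smash B D) :=
  fun z => match (z : smash_carrier A C) with
  | None => sp0 (smash B D)
  | Some p =>
      spsum [seq spi (smash_q (b, d) : smash B D)
            | b <- spelems (f (val p).1 : SP_carrier B),
              d <- spelems (g (val p).2 : SP_carrier D)]
  end.

(* S^1 = R / Z (quotient topology), based at 0; Sigma X = S^1 /\ X;          *)
Section circle.
Context (R : realType).

Definition circle_carrier : choiceType := {x : R | (0 <= x) && (x < 1)}.

Lemma circle_zero_proof : (0 <= (0 : R)) && ((0 : R) < 1).
Proof. by rewrite lexx ltr01. Qed.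

Definition circle0 : circle_carrier := exist _ 0 circle_zero_proof.

Definition circle_q (x : R) : circle_carrier :=
  insubd circle0 (x - (Num.floor x)%:~R).

Definition circle : Type :=
  @final_top unit (fun _ => (R : topologicalType)) circle_carrier (fun _ => circle_q).
HB.instance Definition _ := Topological.on circle.
HB.instance Definition _ := isPointed.Build circle (circle0 : circle_carrier).
End circle.

Definition sphere0 : Type := bool.
HB.instance Definition _ := Topological.copy sphere0 bool.
HB.instance Definition _ := isPointed.Build sphere0 false.

Fixpoint sphere (R : realType) (n : nat) : ptopologicalType :=
  match n with
  | 0 => sphere0
  | n'.+1 => smash (circle R) (sphere R n')
  end.

Definition susp (R : realType) (X : ptopologicalType) : ptopologicalType :=
  smash (circle R) X.

Definition susp_mv (R : realType) (X Y : ptopologicalType) (f : X -> SP Y)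
  : susp R X -> SP (susp R Y) := mv_smash (@spi (circle R)) f.

Arguments susp_mv R {X Y} f _.

(* suspension isomorphism on representatives:
   s_Z [alpha] = [id_{S^1} /\triangle alpha], alpha : Z -> SP(S^n) *)
Definition susp_coh (R : realType) (n : nat) (Z : ptopologicalType)
  (alpha : Z -> SP (sphere R n)) : susp R Z -> SP (sphere R n.+1) :=
  mv_smash (@spi (circle R)) alpha.
Arguments susp_coh R n {Z} alpha _.

Definition based_map (Y Z : ptopologicalType) (g : Y -> Z) : Prop :=
  continuous g /\ g point = point.

Definition based_homotopic (R : realType) (Y Z : ptopologicalType)
  (g h : Y -> Z) : Prop :=
  exists H : R * Y -> Z,
    [/\ {within [set p : R * Y | p.1 \in `[0, 1]], continuous H},
        (forall y, H (0, y) = g y),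
        (forall y, H (1, y) = h y) &
        (forall t, t \in `[0, 1] -> H (t, point) = point)].

Definition hclass (R : realType) (Y Z : ptopologicalType) (g : Y -> Z)
  : set (Y -> Z) :=
  [set h | based_map h /\ based_homotopic R h g].

From HB Require Import structures.
From mathcomp Require Import all_boot all_order all_algebra finmap.
From mathcomp Require Import all_classical all_reals all_analysis.
From mathcomp Require multiset.

(* The two cohomology classes have the same representative on the nose.
   The extension [sp_ext] is the Kleisli extension of the monad SP, hence
   [sp_ext G (sp_ext F m) = sp_ext (sp_ext G \o F) m], and [id_{S^1} /\triangle g]
   sends (t, c) to the image of [g c] under the inclusion c |-> (t, c).  Both
   (Sigma f)^*(s_Y alpha) and s_X(f^* alpha) therefore send (t, x) to the sum
   of the points (t, e) over d in f x and e in alpha d. *)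

Set Implicit Arguments.
Unset Strict Implicit.
Unset Printing Implicit Defensive.

Section symmetric_product_algebra.
Variable K : ptopologicalType.
Implicit Types (a b m : SP_carrier K) (s : seq (SP_carrier K)).

Lemma spP a b : (forall w, val a w = val b w) -> a = b.
Proof. by move=> eq_ab; apply: val_inj; apply/multiset.msetP. Qed.

Lemma val_spadd a b w : val (spadd a b) w = (val a w + val b w)%N.
Proof.
rewrite /spadd val_insubd multiset.msetE2 (eqP (valP a)) (eqP (valP b)) /=.
by rewrite multiset.msetE2.
Qed.

Lemma val_spsum s w : val (spsum s) w = (\sum_(m <- s) val m w)%N.
Proof.
elim: s => [|m s IHs] /=; first by rewrite big_nil multiset.mset0E.
by rewrite big_cons val_spadd IHs.
Qed.

Lemma perm_spelems_spadd a b :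
  perm_eq (spelems (spadd a b)) (spelems a ++ spelems b).
Proof.
apply/allP => w _ /=.
by rewrite count_cat !multiset.count_mem_mset -val_spadd.
Qed.

Lemma big_spelems_spsum (F : K -> nat) s :
  (\sum_(y <- spelems (spsum s)) F y = \sum_(m <- s) \sum_(y <- spelems m) F y)%N.
Proof.
elim: s => [|m s IHs] /=; first by rewrite /spelems big_nil multiset.enum_mset0 big_nil.
by rewrite big_cons -IHs (perm_big _ (perm_spelems_spadd _ _)) big_cat.
Qed.

Lemma point_notin_spelems m : point \notin spelems m.
Proof.
by rewrite -has_pred1 has_count multiset.count_mem_mset (eqP (valP m)).
Qed.

Lemma spelems_spi (y : K) : spelems (spi y) = if y == point then [::] else [:: y].
Proof.
rewrite /spelems /spi val_insubd multiset.msetnE.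
by have [->|_] := eqVneq y point; rewrite /= ?multiset.enum_mset0 ?multiset.enum_msetn.
Qed.

End symmetric_product_algebra.

Section Kleisli_extension.
Variables Y Z : ptopologicalType.

Lemma val_sp_ext (G : Y -> SP Z) (m : SP Y) w :
  val (sp_ext G m : SP_carrier Z) w
  = (\sum_(y <- spelems (m : SP_carrier Y)) val (G y : SP_carrier Z) w)%N.
Proof. by rewrite /sp_ext val_spsum big_map. Qed.

Lemma eq_in_sp_ext (F G : Y -> SP Z) (m : SP Y) :
  {in spelems (m : SP_carrier Y), F =1 G} -> sp_ext F m = sp_ext G m.
Proof. by move=> eqFG; rewrite /sp_ext; congr spsum; apply/eq_in_map. Qed.

Lemma sp_ext_spsum (G : Y -> SP Z) (s : seq (SP_carrier Y)) :
  sp_ext G (spsum s : SP Y) = spsum [seq (sp_ext G m : SP_carrier Z) | m <- s].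
Proof.
apply: spP => w; rewrite val_sp_ext big_spelems_spsum val_spsum big_map.
by apply: eq_bigr => m _; rewrite val_sp_ext.
Qed.

Lemma sp_ext_spi (G : Y -> SP Z) : G point = point -> forall y, sp_ext G (spi y) = G y.
Proof.
move=> G0 y; rewrite /sp_ext spelems_spi.
have [->|_] /= := eqVneq y point; first by rewrite G0.
by apply: spP => w; rewrite val_spadd multiset.mset0E addn0.
Qed.

End Kleisli_extension.

Lemma sp_ext_comp (Y Z W : ptopologicalType) (F : Y -> SP Z) (G : Z -> SP W) (m : SP Y) :
  sp_ext G (sp_ext F m) = sp_ext (sp_ext G \o F) m.
Proof. by rewrite [sp_ext F m]/sp_ext sp_ext_spsum -map_comp. Qed.

Lemma mv_smash_spi_Some (A C D : ptopologicalType) (g : C -> SP D) p :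
  mv_smash (@spi A) g (Some p : smash_carrier A C)
  = sp_ext (fun d => spi (smash_q ((val p).1, d) : smash A D)) (g (val p).2).
Proof.
case: p => -[a c] /= /andP[a_neq _].
by rewrite /mv_smash /= spelems_spi (negbTE a_neq) /= cats0.
Qed.

Lemma mv_pull_mv_smash_spi (A X Y Z : ptopologicalType)
  (f : X -> SP Y) (alpha : Y -> SP Z) :
  mv_pull (mv_smash (@spi A) f) (mv_smash (@spi A) alpha)
  = mv_smash (@spi A) (mv_pull f alpha).
Proof.
apply: funext => -[p|]; rewrite /mv_pull /comp; last first.
  by rewrite /sp_ext /spelems /= multiset.enum_mset0.
rewrite !mv_smash_spi_Some 2!sp_ext_comp.
apply: eq_in_sp_ext => y y_elem; rewrite !compE.
have y_neq : y != point by apply: contraTneq y_elem => ->; exact: point_notin_spelems.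
have /andP[p1_neq _] := valP p.
have p1y : (((val p).1, y).1 != point) && (((val p).1, y).2 != point) by apply/andP.
by rewrite sp_ext_spi // /smash_q insubT mv_smash_spi_Some.
Qed.

Theorem corollary1p4 (R : realType) (X Y : ptopologicalType)
  (f : X -> SP Y) (hf : based_map f)
  (n : nat) (alpha : Y -> SP (sphere R n)) (halpha : based_map alpha) :
  hclass R (mv_pull (susp_mv R f) (susp_coh R n alpha))
  = hclass R (susp_coh R n (mv_pull f alpha)).
Proof. by rewrite /susp_mv /susp_coh mv_pull_mv_smash_spi. Qed.
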